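(* Let $G$ and $H$ be Polish groups such that $G$ has the Rosendal property. Let $\varphi:G\to H$ be a continuous homomorphism with $\varphi(G)\neq\{1_H\}$. Let $E$ be an equivalence relation on $G$ such that for every infinite set $I\subseteq\mathbb{N}$ the set $$Q_I=\{g\in G:\text{there is a strictly increasing sequence }(k_n)_{n\ge1}\text{ in } I \text{ with } \varphi(g)^{k_n}\to 1_H\}$$ is $E$-invariant. Then every equivalence class of $E$ that is dense in $G$ is meager. In particular, $E$ does not have a comeager class.
   Context: A Polish group $G$ has the Rosendal property if for every infinite set $I\subseteq\mathbb{N}$ and every neighbourhood $V$ of $1$ in $G$, the set $\{g\in G:\text{there is } n\in I \text{ with } g^n\in V\}$ is dense in $G$. A set is $E$-invariant if it is a union of $E$-classes. *)

From mathcomp Require Import all_boot all_order all_algebra.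
From mathcomp Require Import all_classical all_reals all_analysis.
From mathcomp Require Import Rstruct Rstruct_topology.
Set Implicit Arguments. Unset Strict Implicit. Unset Printing Implicit Defensive.
Import Order.TTheory GRing.Theory Num.Theory.
Local Open Scope classical_set_scope.
Local Open Scope ring_scope.

Record TopGroup (T : topologicalType) := {
  gmul : T -> T -> T;
  ginv : T -> T;
  gone : T;
  gmulA : forall x y z, gmul x (gmul y z) = gmul (gmul x y) z;
  gmul1 : forall x, gmul gone x = x;
  gmulV : forall x, gmul (ginv x) x = gone;
  gmul_cont : continuous (fun p : T * T => gmul p.1 p.2);
  ginv_cont : continuous ginv }.

Definition gpow (T : topologicalType) (G : TopGroup T) (g : T) (n : nat) : T :=
  iter n (gmul G g) (gone G).

Definition is_metric (T : Type) (d : T -> T -> Rdefinitions.R) : Prop :=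
  (forall x y, 0 <= d x y) /\
  (forall x y, d x y = 0 <-> x = y) /\
  (forall x y, d x y = d y x) /\
  (forall x y z, d x z <= d x y + d y z).

Definition metric_compatible (T : topologicalType) (d : T -> T -> Rdefinitions.R) : Prop :=
  forall (x : T) (A : set T),
    nbhs x A <-> exists2 e : Rdefinitions.R, 0 < e & [set y | d x y < e] `<=` A.

Definition metric_complete (T : topologicalType) (d : T -> T -> Rdefinitions.R) : Prop :=
  forall u : nat -> T,
    (forall e : Rdefinitions.R, 0 < e ->
       exists N : nat, forall m n : nat, (N <= m)%N -> (N <= n)%N -> d (u m) (u n) < e) ->
    exists x : T, u @ \oo --> x.

Definition separable (T : topologicalType) : Prop :=
  exists D : set T, countable D /\ dense D.

Definition completely_metrizable (T : topologicalType) : Prop :=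
  exists d : T -> T -> Rdefinitions.R,
    [/\ is_metric d, metric_compatible d & metric_complete d].

Definition polish (T : topologicalType) : Prop :=
  separable T /\ completely_metrizable T.

Definition nowhere_dense (T : topologicalType) (A : set T) : Prop :=
  interior (closure A) = set0.

Definition meager (T : topologicalType) (A : set T) : Prop :=
  exists F : nat -> set T, (forall n, nowhere_dense (F n)) /\ A `<=` \bigcup_n F n.

Definition comeager (T : topologicalType) (A : set T) : Prop := meager (~` A).

Definition rosendal (T : topologicalType) (G : TopGroup T) : Prop :=
  forall (I : set nat), infinite_set I ->
  forall (V : set T), nbhs (gone G) V ->
    dense [set g : T | exists2 n : nat, I n & V (gpow G g n)].

Definition is_hom (T U : topologicalType) (G : TopGroup T) (H : TopGroup U)
  (phi : T -> U) : Prop :=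
  forall x y, phi (gmul G x y) = gmul H (phi x) (phi y).

Definition is_equivalence (T : Type) (E : T -> T -> Prop) : Prop :=
  (forall x, E x x) /\ (forall x y, E x y -> E y x) /\
  (forall x y z, E x y -> E y z -> E x z).

Definition eclass (T : Type) (E : T -> T -> Prop) (x : T) : set T := [set y | E x y].

Definition E_invariant (T : Type) (E : T -> T -> Prop) (A : set T) : Prop :=
  forall x y, E x y -> A x -> A y.

Definition QI (T U : topologicalType) (H : TopGroup U) (phi : T -> U) (I : set nat) : set T :=
  [set g | exists k : nat -> nat,
     [/\ (forall n, (k n < k n.+1)%N), (forall n, I (k n)) &
         (fun n => gpow H (phi g) (k n)) @ \oo --> gone H]].

From mathcomp Require Import all_boot all_order all_algebra.
From mathcomp Require Import all_classical all_reals all_analysis.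
From mathcomp Require Import Rstruct Rstruct_topology lra.
Set Implicit Arguments. Unset Strict Implicit. Unset Printing Implicit Defensive.
Import Order.TTheory GRing.Theory Num.Theory.
Local Open Scope classical_set_scope.
Local Open Scope ring_scope.

(* A non-meager E-class C meets every Q_I, since Q_I is comeager: it contains
   the intersection over m of the open sets "phi(g)^n is within 1/(m+1) of 1 for
   some n >= m in I", which are dense by the Rosendal property.  By invariance C
   then lies in every Q_I, and an element g of all Q_I has phi(g) = 1 (apply Q_I
   to the exponents n for which phi(g)^n stays outside a small neighbourhood of
   1).  Thus C lies in the kernel of phi, whose complement is a nonempty open set,
   so C is not dense.  A comeager class would be dense and, by Baire, non-meager. *)

Local Notation R := Rdefinitions.R.

Section TopGroupTheory.
Variables (T : topologicalType) (G : TopGroup T).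

Lemma gmul_idem x : gmul G x x = x -> x = gone G.
Proof.
move=> xx; have : gmul G (ginv G x) (gmul G x x) = gmul G (ginv G x) x by rewrite xx.
by rewrite gmulA gmulV gmul1.
Qed.

Lemma gmulxV x : gmul G x (ginv G x) = gone G.
Proof. by apply: gmul_idem; rewrite -gmulA [gmul G (ginv G x) _]gmulA gmulV gmul1. Qed.

Lemma gmulx1 x : gmul G x (gone G) = x.
Proof. by rewrite -(gmulV G x) gmulA gmulxV gmul1. Qed.

Lemma continuous_gmull a : continuous (fun x => gmul G a x).
Proof. by move=> y; exact: (cvg_comp2 (cvg_cst a) cvg_id (@gmul_cont _ G (a, y))). Qed.

Lemma continuous_gpow n : continuous (fun g => gpow G g n).
Proof.
elim: n => [|n IHn] x; first exact: cvg_cst.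
exact: (cvg_comp2 cvg_id (IHn x) (@gmul_cont _ G (x, gpow G x n))).
Qed.

End TopGroupTheory.

Section Homomorphism.
Variables (TG TH : topologicalType) (G : TopGroup TG) (H : TopGroup TH).
Variables (phi : TG -> TH) (hom_phi : is_hom G H phi).

Lemma hom_gone : phi (gone G) = gone H.
Proof. by apply: gmul_idem; rewrite -hom_phi gmul1. Qed.

Lemma hom_gpow g n : phi (gpow G g n) = gpow H (phi g) n.
Proof. by elim: n => [|n IHn]; rewrite /= ?hom_gone // hom_phi IHn. Qed.

End Homomorphism.

Lemma finite_nat_ubound (A : set nat) : finite_set A ->
  exists N, forall n, (N <= n)%N -> ~ A n.
Proof.
move=> /finite_fsetP[X ->]; exists (\max_(x <- finmap.enum_fset X) x).+1 => n.
rewrite ltnNge => /negP + Xn; apply.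
exact: (@leq_bigmax_seq _ (finmap.enum_fset X) xpredT (fun i => i) n).
Qed.

Lemma cvg_eventually (T : topologicalType) (u : nat -> T) (x : T) (A : set T) :
  u @ \oo --> x -> nbhs x A -> exists N, forall n, (N <= n)%N -> A (u n).
Proof. by move=> ux /ux[N _ uA]; exists N => n /uA. Qed.


Section MeagerSets.
Variable T : topologicalType.

Lemma nowhere_denseC (O : set T) : open O -> dense O -> nowhere_dense (~` O).
Proof.
move=> oO dO; rewrite /nowhere_dense -subset0 => x x_int.
have [y [y_int Oy]] := dO _ (ex_intro _ x x_int) (@open_interior _ _).
have /(_ O) [] : closure (~` O) y := nbhs_singleton y_int.
  by move: oO; rewrite openE => /(_ y Oy).
by move=> z [].
Qed.

Lemma meagerS (A B : set T) : A `<=` B -> meager B -> meager A.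
Proof. by move=> AB [F [nF BF]]; exists F; split => // x /AB /BF. Qed.

Lemma meagerU (A B : set T) : meager A -> meager B -> meager (A `|` B).
Proof.
move=> [F [nF AF]] [F' [nF' BF']].
exists (fun n => if odd n then F' n./2 else F n./2); split.
  by move=> n; case: (odd n).
move=> x [/AF[n _ Fx]|/BF'[n _ F'x]].
- by exists n.*2; rewrite // odd_double doubleK.
- by exists n.*2.+1; rewrite //= odd_double uphalf_double.
Qed.

End MeagerSets.

Definition dball (T : Type) (d : T -> T -> R) (x : T) (r : R) : set T :=
  [set y | d x y < r].

Section MetricSpace.
Variables (T : topologicalType) (d : T -> T -> R).
Hypotheses (md : is_metric d) (cd : metric_compatible d).

Let d_triangle x y z : d x z <= d x y + d y z.
Proof. by case: md => _ [_ [_]]. Qed.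

Let d_sym x y : d x y = d y x.
Proof. by case: md => _ [_ []]. Qed.

Let d_refl x : d x x = 0.
Proof. by case: md => _ [d_eq0 _]; apply/d_eq0. Qed.

Let d_gt0 x y : x <> y -> 0 < d x y.
Proof.
case: md => d_ge0 [d_eq0 _] xy; rewrite lt_def d_ge0 andbT.
by apply/eqP => /d_eq0.
Qed.

Lemma nbhs_dball x e : 0 < e -> nbhs x (dball d x e).
Proof. by move=> e_gt0; apply/cd; exists e. Qed.

Lemma nbhs_dballP x A : nbhs x A -> exists2 e, 0 < e & dball d x e `<=` A.
Proof. by move/cd. Qed.

Lemma open_dball x e : open (dball d x e).
Proof.
rewrite openE /dball => y /= dxy; apply/cd; exists (e - d x y); first by rewrite subr_gt0.
by move=> z /= dyz; have := d_triangle x y z; lra.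
Qed.

Lemma open_setC1 (x : T) : open (~` [set x]).
Proof.
rewrite openE => y /= yx; apply: filterS (nbhs_dball y (d_gt0 yx)) => z + zx.
by rewrite /dball zx /= ltxx.
Qed.

Lemma dball_disjoint x y z r : 2 * r <= d x y -> dball d x r z -> ~ dball d y r z.
Proof. by rewrite /dball /= (d_sym y) => r_le dxz; have := d_triangle x z y; lra. Qed.

Lemma cvg_subseq_in (u : nat -> T) (y : T) (I : set nat) :
  (forall m, exists2 n, I n /\ (m <= n)%N & d y (u n) < m.+1%:R^-1) ->
  exists k : nat -> nat,
    [/\ forall n, (k n < k n.+1)%N, forall n, I (k n) & (fun n => u (k n)) @ \oo --> y].
Proof.
move=> close.
have {}close m : exists n, (I n /\ (m <= n)%N) /\ d y (u n) < m.+1%:R^-1.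
  by have [n] := close m; exists n.
have [f f_spec] := boolp.choice close.
pose m j := iter j (fun p => (f p).+1) 0%N.
have m_ge j : (j <= m j)%N.
  by elim: j => // j IHj /=; rewrite ltnS; apply: leq_trans IHj (f_spec (m j)).1.2.
exists (f \o m); split => [j|j|].
- by case: (f_spec (m j.+1)) => -[].
- by case: (f_spec (m j)) => -[].
- move=> A /nbhs_dballP[e e_gt0 eA].
  have [N _ Ne] := near_infty_natSinv_lt (PosNum e_gt0).
  exists N => // j Nj; apply: eA.
  exact: lt_trans (f_spec (m j)).2 (Ne _ (leq_trans Nj (m_ge j))).
Qed.

Lemma nowhere_dense_dball_avoid (F : set T) y e : nowhere_dense F -> 0 < e ->
  exists z r, [/\ 0 < r, dball d z r `<=` dball d y e & dball d z r `&` F = set0].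
Proof.
move=> nF e_gt0; apply: contrapT => no_ball.
suff yeF : dball d y e `<=` closure F.
  have : interior (closure F) y := filterS yeF (nbhs_dball y e_gt0).
  by rewrite nF; case.
move=> w /= ywe B /nbhs_dballP[e' e'_gt0 wB].
pose r := Num.min e' (e - d y w).
have r_gt0 : 0 < r by rewrite lt_min e'_gt0 subr_gt0.
have [v [wv Fv]] : dball d w r `&` F !=set0.
  apply/set0P/eqP => wrF; apply: no_ball; exists w, r; split => // v.
  rewrite /dball /= lt_min => /andP[_ wv]; have := d_triangle y w v; lra.
by exists v; split => //; apply: wB; move: wv; rewrite /dball /= lt_min => /andP[].
Qed.

Lemma nowhere_dense_small_dball_avoid (F : set T) y e b :
  nowhere_dense F -> 0 < e -> 0 < b ->
  exists z r, [/\ 0 < r, r <= b, dball d z (2 * r) `<=` dball d y e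
                & dball d z (2 * r) `&` F = set0].
Proof.
move=> nF e_gt0 b_gt0.
have [z [r [r_gt0 zy zF]]] := nowhere_dense_dball_avoid y nF e_gt0.
pose s := Num.min r b.
have s_gt0 : 0 < s by rewrite lt_min r_gt0.
have s_le_r : s <= r by rewrite ge_min lexx.
have s_le_b : s <= b by rewrite ge_min lexx orbT.
have sub_r : dball d z (2 * (s / 2)) `<=` dball d z r by rewrite /dball => w /=; lra.
exists z, (s / 2); split; [by rewrite divr_gt0 | lra | | ].
- by move=> w /sub_r /zy.
- by rewrite -subset0 => w [/sub_r zw Fw]; rewrite -zF.
Qed.

Hypothesis cmp : metric_complete d.

(* The factor 2 keeps the limit, at distance <= r (n+1) from x (n+1), inside the
   n-th ball. *)
Lemma nested_dball_cvg (x : nat -> T) (r : nat -> R) :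
  (forall n, 0 < r n) -> (forall n, r n.+1 <= n.+1%:R^-1) ->
  (forall n, dball d (x n.+1) (2 * r n.+1) `<=` dball d (x n) (r n)) ->
  exists l, forall n, dball d (x n.+1) (2 * r n.+1) l.
Proof.
move=> r_gt0 r_small nested.
have nested_far n k : dball d (x (n + k)%N) (r (n + k)%N) `<=` dball d (x n) (r n).
  elim: k => [|k IHk]; first by rewrite addn0.
  move=> w; rewrite addnS => w_in; apply/IHk/nested; move: w_in.
  by rewrite /dball /=; have := r_gt0 (n + k).+1; lra.
have d_lt n m : (n <= m)%N -> d (x n) (x m) < r n.
  move=> nm; change (dball d (x n) (r n) (x m)); rewrite -(subnKC nm).
  by apply: (nested_far n (m - n)%N); rewrite /dball /= d_refl.
have cauchy_x : forall eps, 0 < eps -> exists N, forall m k,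
    (N <= m)%N -> (N <= k)%N -> d (x m) (x k) < eps.
  move=> eps eps_gt0; have eps2_gt0 : 0 < eps / 2 by rewrite divr_gt0.
  have [N _ Neps] := near_infty_natSinv_lt (PosNum eps2_gt0).
  exists N.+1 => m k Nm Nk.
  have := d_triangle (x m) (x N.+1) (x k); rewrite [d (x m) (x N.+1)]d_sym.
  have := le_lt_trans (r_small N) (Neps N (leqnn N)).
  have := d_lt _ _ Nm; have := d_lt _ _ Nk; rewrite /=; lra.
have [l xl] := cmp cauchy_x.
exists l => n; have [M HM] := cvg_eventually xl (nbhs_dball l (r_gt0 n.+1)).
have := d_triangle (x n.+1) (x (maxn M n.+1)) l; rewrite [d (x (maxn _ _)) l]d_sym.
have := HM _ (leq_maxl M n.+1); have := d_lt _ _ (leq_maxr M n.+1).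
by rewrite /dball /=; lra.
Qed.

Lemma dball_not_meager x e : 0 < e -> ~ meager (dball d x e).
Proof.
move=> e_gt0 [F [nF Fcover]].
(* The premise 0 < p.2.2 makes the step total, so that it yields a choice function. *)
have step (p : nat * (T * R)) : exists q : T * R, 0 < p.2.2 ->
    [/\ 0 < q.2, q.2 <= p.1.+1%:R^-1, dball d q.1 (2 * q.2) `<=` dball d p.2.1 p.2.2
      & dball d q.1 (2 * q.2) `&` F p.1 = set0].
  case: p => n [y r] /=; have [r_gt0|] := boolp.pselect (0 < r); last by exists (y, r).
  have n_inv_gt0 : 0 < n.+1%:R^-1 :> R by rewrite invr_gt0.
  have [z [s ?]] := nowhere_dense_small_dball_avoid y (nF n) r_gt0 n_inv_gt0.
  by exists (z, s).
have [f f_spec] := boolp.choice step.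
pose c := nat_rect (fun=> (T * R)%type) (x, e) (fun n p => f (n, p)).
have c_gt0 n : 0 < (c n).2 by elim: n => // n IHn; case: (f_spec (n, c n) IHn).
have c_spec n := f_spec (n, c n) (c_gt0 n).
have [l l_in] : exists l, forall n, dball d (c n.+1).1 (2 * (c n.+1).2) l.
  by apply: (@nested_dball_cvg (fun n => (c n).1) (fun n => (c n).2)) => // n;
    case: (c_spec n).
have [|n _ Fnl] := Fcover l; first by case: (c_spec 0%N) => _ _ + _; apply; exact: l_in.
case: (c_spec n) => _ _ _ avoid.
have : (dball d (c n.+1).1 (2 * (c n.+1).2) `&` F n) l := conj (l_in n) Fnl.
by rewrite avoid.
Qed.

End MetricSpace.

Section BaireConsequences.
Variable T : topologicalType.
Hypothesis cmT : completely_metrizable T.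

Lemma open_not_meager (U : set T) : open U -> U !=set0 -> ~ meager U.
Proof.
have [d [md cd cmp]] := cmT.
move=> oU [x Ux] mU.
have [e e_gt0 eU] := nbhs_dballP cd (open_nbhs_nbhs (conj oU Ux)).
exact: (@dball_not_meager _ _ md cd cmp x e e_gt0 (meagerS eU mU)).
Qed.

Lemma comeager_dense (A : set T) : comeager A -> dense A.
Proof.
move=> mAC O O0 oO; apply/set0P/eqP => OA.
apply: (open_not_meager oO O0); apply: meagerS mAC.
exact/disj_setPLR/disj_set2P.
Qed.

Lemma comeager_not_meager (A : set T) : A !=set0 -> comeager A -> ~ meager A.
Proof.
move=> A0 mAC mA; apply: (open_not_meager openT) => //.
  by case: A0 => x _; exists x.
by rewrite -(setUv A); apply: meagerU.
Qed.

End BaireConsequences.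

Section MetricTopGroup.
Variables (T : topologicalType) (G : TopGroup T) (d : T -> T -> R).
Hypotheses (md : is_metric d) (cd : metric_compatible d).

(* Along a cofinite set of exponents, a^n lies in a neighbourhood W of 1 with
   a W ∩ W = ∅; then a^(N+1) = a a^N lies in both a W and W. *)
Lemma gpow_subseq_cvg_gone (a : T) :
  (forall I, infinite_set I -> exists k : nat -> nat,
     (forall n, I (k n)) /\ (fun n => gpow G a (k n)) @ \oo --> gone G) ->
  a = gone G.
Proof.
move=> subseq_cvg; apply: contrapT => a_ne1.
have [d_ge0 [d_eq0 _]] := md.
pose r := d (gone G) a / 2.
have r_gt0 : 0 < r.
  by rewrite divr_gt0 // lt_def d_ge0 andbT; apply/eqP => /d_eq0 /esym.
pose W := dball d (gone G) r `&` [set x | dball d a r (gmul G a x)].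
have W1 : nbhs (gone G) W.
  apply: filterI; first exact: nbhs_dball.
  have := @continuous_gmull _ G a (gone G) (dball d a r).
  by rewrite gmulx1; apply; apply: nbhs_dball.
have [N NW] : exists N, forall n, (N <= n)%N -> W (gpow G a n).
  have /finite_nat_ubound[N NW] : finite_set [set n | ~ W (gpow G a n)].
    apply: contrapT => /(subseq_cvg _)[k [notW k_cvg]].
    have [M MW] := cvg_eventually k_cvg W1.
    exact: notW M (MW M (leqnn M)).
  by exists N => n /NW /contrapT.
have [aN1_near1 _] := NW N.+1 (leqnSn N).
have [_ /= aN1_neara] := NW N (leqnn N).
have two_r : 2 * r <= d (gone G) a by rewrite /r; lra.
exact: (dball_disjoint md two_r aN1_near1 aN1_neara).
Qed.

End MetricTopGroup.

Section RosendalComeager.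
Variables (TG TH : topologicalType) (G : TopGroup TG) (H : TopGroup TH).
Variables (phi : TG -> TH) (dH : TH -> TH -> R).
Hypotheses (hom_phi : is_hom G H phi) (cont_phi : continuous phi).
Hypotheses (mdH : is_metric dH) (cdH : metric_compatible dH).

Definition pow_near_gone (I : set nat) (m : nat) : set TG :=
  [set g | exists2 n, I n /\ (m <= n)%N & dH (gone H) (gpow H (phi g) n) < m.+1%:R^-1].

Lemma open_pow_near_gone I m : open (pow_near_gone I m).
Proof.
rewrite openE => g [n nI gn].
have near_g : nbhs g [set h | dball dH (gone H) m.+1%:R^-1 (phi (gpow G h n))].
  apply: (@continuous_gpow _ G n g (phi @^-1` dball dH (gone H) m.+1%:R^-1)).
  apply: cont_phi.
  by rewrite (hom_gpow hom_phi); apply: open_nbhs_nbhs; split; first exact: open_dball.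
by apply: filterS near_g => h; rewrite /dball /= (hom_gpow hom_phi) => hn; exists n.
Qed.

Lemma dense_pow_near_gone I m : rosendal G -> infinite_set I -> dense (pow_near_gone I m).
Proof.
move=> rosG infI W W0 oW.
have near1 : nbhs (gone G) (phi @^-1` dball dH (gone H) m.+1%:R^-1).
  by apply: cont_phi; rewrite (hom_gone hom_phi); apply: (nbhs_dball cdH); rewrite invr_gt0.
have [g [Wg [n [In nm] gn]]] :=
  rosG _ (infinite_setD infI (finite_II m)) _ near1 W W0 oW.
exists g; split => //; exists n; last by rewrite -(hom_gpow hom_phi).
by split => //; rewrite leqNgt; apply/negP.
Qed.

Lemma QI_pow_near_gone I g : (forall m, pow_near_gone I m g) -> QI H phi I g.
Proof. by move=> near; apply: (cvg_subseq_in cdH (u := gpow H (phi g))) => m; exact: near. Qed.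

Lemma comeager_QI I : rosendal G -> infinite_set I -> comeager (QI H phi I).
Proof.
move=> rosG infI; exists (fun m => ~` pow_near_gone I m); split.
  move=> m; apply: nowhere_denseC; first exact: open_pow_near_gone.
  exact: dense_pow_near_gone.
move=> g notQ; apply: contrapT => near_all; apply/notQ/QI_pow_near_gone => m.
by apply: contrapT => not_near; apply: near_all; exists m.
Qed.

Lemma nonmeager_class_sub_ker (E : TG -> TG -> Prop) x :
  rosendal G -> is_equivalence E ->
  (forall I, infinite_set I -> E_invariant E (QI H phi I)) ->
  ~ meager (eclass E x) -> eclass E x `<=` [set g | phi g = gone H].
Proof.
move=> rosG [_ [Esym Etrans]] invQ nmC g xg; apply: (gpow_subseq_cvg_gone mdH cdH) => I infI.
have [c [xc Qc]] : eclass E x `&` QI H phi I !=set0.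
  apply/set0P/eqP => CQ; apply/nmC/(meagerS _ (comeager_QI rosG infI)).
  exact/disj_setPLR/disj_set2P.
have [k [_ Ik k_cvg]] := invQ I infI c g (Etrans _ _ _ (Esym _ _ xc) xg) Qc.
by exists k.
Qed.

End RosendalComeager.

Theorem lemma4p1 (TG TH : topologicalType) (G : TopGroup TG) (H : TopGroup TH)
  (polG : polish TG) (polH : polish TH) (rosG : rosendal G)
  (phi : TG -> TH) (hom_phi : is_hom G H phi) (cont_phi : continuous phi)
  (nontriv : exists g : TG, phi g <> gone H)
  (E : TG -> TG -> Prop) (eqE : is_equivalence E)
  (hQ : forall I : set nat, infinite_set I -> E_invariant E (QI H phi I)) :
  (forall x : TG, dense (eclass E x) -> meager (eclass E x)) /\
  ~ (exists x : TG, comeager (eclass E x)).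
Proof.
have [_ cmG] := polG; have [_ [dH [mdH cdH _]]] := polH.
have dense_meager x : dense (eclass E x) -> meager (eclass E x).
  move=> dC; apply: contrapT => nmC.
  have ker_sub := nonmeager_class_sub_ker hom_phi cont_phi mdH cdH rosG eqE hQ nmC.
  have phi_ne1_open : open [set g | phi g <> gone H].
    exact: (continuousP _).1 cont_phi _ (open_setC1 mdH cdH (gone H)).
  have [g0 phig0] := nontriv.
  have [g [phig /ker_sub]] := dC _ (ex_intro _ g0 phig0) phi_ne1_open.
  exact: phig.
split=> // -[x cC]; have [Erefl _] := eqE.
apply: (comeager_not_meager cmG _ cC); first by exists x; apply: Erefl.
exact/dense_meager/(comeager_dense cmG).
Qed.
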